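(* With $Z_L(t)=\partial z_L(t)/\partial L$, we have $\lim_{L\to\infty}Z_L(L)=-1$ and $\lim_{L\to\infty}Z_L(L/2)=1/2$.
   Context: For $\alpha\in(0,1/\sqrt2)$ let $L_\alpha=\pi/\mathrm{AGM}(\alpha,\tfrac12\sqrt{1+2\alpha^2})$; $\alpha\mapsto L_\alpha$ is a decreasing bijection from $(0,1/\sqrt2)$ onto $(\pi\sqrt2,\infty)$. For $L>\pi\sqrt2$ let $\alpha$ satisfy $L_\alpha=L$ and let $x_0>y_0>0$ satisfy $x_0^2+y_0^2=1$, $x_0y_0=\alpha^2$. Let $(x_L,y_L,z_L)(t)$ solve $x'=-xz$, $y'=yz$, $z'=x^2-y^2$ ($'=d/dt$) with initial value $(x_0,y_0,0)$. *)

From Stdlib Require Import Reals Lra.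
From Coquelicot Require Import Coquelicot.
Open Scope R_scope.

Fixpoint agm_seq (a b : R) (n : nat) : R * R :=
  match n with
  | O => (a, b)
  | S m => let p := agm_seq a b m in ((fst p + snd p) / 2, sqrt (fst p * snd p))
  end.

Definition AGM (a b : R) : R := real (Lim_seq (fun n => fst (agm_seq a b n))).

Definition Lalpha (alpha : R) : R :=
  PI / AGM alpha (sqrt (1 + 2 * alpha ^ 2) / 2).

Definition solves_system (x y z : R -> R) (x0 y0 : R) : Prop :=
  x 0 = x0 /\ y 0 = y0 /\ z 0 = 0 /\
  (forall t, is_derive x t (- (x t * z t))) /\
  (forall t, is_derive y t (y t * z t)) /\
  (forall t, is_derive z t (x t ^ 2 - y t ^ 2)).

Definition is_solution_family (xs ys zs : R -> R -> R) : Prop :=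
  forall L, PI * sqrt 2 < L ->
    exists alpha x0 y0,
      0 < alpha < / sqrt 2 /\ Lalpha alpha = L /\
      x0 > y0 /\ y0 > 0 /\ x0 ^ 2 + y0 ^ 2 = 1 /\ x0 * y0 = alpha ^ 2 /\
      solves_system (xs L) (ys L) (zs L) x0 y0.

Definition ZL (zs : R -> R -> R) (L t : R) : R := Derive (fun M => zs M t) L.

From Stdlib Require Import Reals Lra Psatz.
From Coquelicot Require Import Coquelicot.
Open Scope R_scope.

(* Along a solution, [w = x^2 - y^2] satisfies [z' = w], [w' = -2 z (1 - z^2)] (using the
   conserved quantities [x y] and [x^2 + y^2 + z^2]). Reparametrised by an angle [p] with
   [dp/dt = 2 sqrt (beta^2 cos^2 p + alpha^2 sin^2 p)], [beta = sqrt (1 + 2 alpha^2) / 2], this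
   system is solved explicitly by [z = sqrt (1 - 2 alpha^2) sin p]; by Gauss' formula
   [int_0^PI dp / sqrt (a^2 cos^2 p + b^2 sin^2 p) = PI / AGM a b], proved via Landen's
   transformation, the angle [PI] is reached at time [L/2]. Hence [z_L] is [L/2]-antiperiodic,
   and it leaves [0] with slope [c = sqrt (1 - 4 alpha^4)] up to an error [2 t^2]. Therefore
   [z_M (L) = z_M (L - M) = - c_M (M - L) + O((M - L)^2)] and [z_L (L) = 0], which gives
   [Z_L (L) = - c_L]; likewise [Z_L (L/2) = c_L / 2]. Finally [alpha_L <= PI / L], since
   [AGM alpha beta >= alpha], so [c_L -> 1]. *)

(** * Real-variable calculus *)

Lemma continuity_pt_of_is_derive (f : R -> R) (x l : R) :
  is_derive f x l -> continuity_pt f x.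
Proof.
  intro H. apply derivable_continuous_pt. exists l. now apply is_derive_Reals.
Qed.

Lemma is_derive_comp_R (f g : R -> R) (x df dg : R) :
  is_derive f (g x) df -> is_derive g x dg -> is_derive (fun t => f (g t)) x (df * dg).
Proof. intros Hf Hg. rewrite Rmult_comm. exact (is_derive_comp f g x df dg Hf Hg). Qed.

(* Stated with an eta-expanded function, the form in which [auto_derive] leaves [Derive]. *)
Lemma Derive_of_is_derive (f : R -> R) (x l : R) :
  is_derive f x l -> Derive (fun y => f y) x = l.
Proof. exact (is_derive_unique f x l). Qed.

Lemma MVT_abs_le (f df : R -> R) (a b K : R) :
  (forall x, is_derive f x (df x)) ->
  (forall x, Rmin a b <= x <= Rmax a b -> Rabs (df x) <= K) ->
  Rabs (f b - f a) <= K * Rabs (b - a).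
Proof.
  intros Hd Hb.
  destruct (MVT_gen f a b df) as [c [Hc ->]].
  - intros; apply Hd.
  - intros; eapply continuity_pt_of_is_derive; apply Hd.
  - rewrite Rabs_mult. apply Rmult_le_compat_r; [apply Rabs_pos | now apply Hb].
Qed.

Lemma is_derive_0_const (f : R -> R) :
  (forall x, is_derive f x 0) -> forall t, f t = f 0.
Proof.
  intros Hd t.
  assert (H : Rabs (f t - f 0) <= 0 * Rabs (t - 0)).
  { apply (MVT_abs_le f (fun _ => 0)); [exact Hd|]. intros; rewrite Rabs_R0; lra. }
  pose proof (Rabs_pos (f t - f 0)).
  assert (Hz : Rabs (f t - f 0) = 0) by lra.
  apply Rabs_eq_0 in Hz. lra.
Qed.

Lemma is_derive_nonpos_le (f df : R -> R) (a b : R) :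
  (forall x, is_derive f x (df x)) -> (forall x, df x <= 0) -> a <= b -> f b <= f a.
Proof.
  intros Hd Hn Hab.
  destruct (MVT_gen f a b df) as [c [_ Hc]].
  - intros; apply Hd.
  - intros; eapply continuity_pt_of_is_derive; apply Hd.
  - specialize (Hn c). nra.
Qed.

Lemma gronwall_zero_nonneg (E dE : R -> R) (C : R) :
  (forall s, is_derive E s (dE s)) -> (forall s, 0 <= E s) ->
  (forall s, dE s <= C * E s) -> E 0 = 0 -> forall s, 0 <= s -> E s = 0.
Proof.
  intros Hd Hp Hb H0 s Hs.
  set (F := fun t => E t * exp (- C * t)).
  assert (HF : forall t, is_derive F t ((dE t - C * E t) * exp (- C * t))).
  { intro t. unfold F. auto_derive; [now exists (dE t)|].
    rewrite (Derive_of_is_derive _ _ _ (Hd t)). ring. }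
  assert (HFs : F s <= F 0).
  { apply (is_derive_nonpos_le F _ 0 s HF); [|exact Hs].
    intro t. pose proof (exp_pos (- C * t)). specialize (Hb t). nra. }
  unfold F in HFs. rewrite H0, Rmult_0_l in HFs.
  pose proof (exp_pos (- C * s)). pose proof (Hp s). nra.
Qed.

Lemma gronwall_zero (E dE : R -> R) (C : R) :
  (forall s, is_derive E s (dE s)) -> (forall s, 0 <= E s) ->
  (forall s, Rabs (dE s) <= C * E s) -> E 0 = 0 -> forall s, E s = 0.
Proof.
  intros Hd Hp Hb H0 s.
  destruct (Rle_or_lt 0 s) as [Hs|Hs].
  - apply (gronwall_zero_nonneg E dE C); auto.
    intro t. specialize (Hb t). apply Rabs_le_between in Hb. lra.
  - replace s with (- - s) by ring.
    apply (gronwall_zero_nonneg (fun t => E (- t)) (fun t => dE (- t) * -1) C); auto; try lra.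
    + intro t. apply is_derive_comp_R; [apply Hd|]. auto_derive; auto; ring.
    + intro t. specialize (Hb (- t)). apply Rabs_le_between in Hb. lra.
    + now rewrite Ropp_0.
Qed.

(** * The reduced system [z' = w], [w' = -2 z (1 - z^2)] *)

(* [duffing_sol G] is the reduced system after a time change of speed [G]. *)
Definition duffing (u : R) : R := -2 * u * (1 - u ^ 2).

Definition duffing_sol (G u v : R -> R) : Prop :=
  (forall s, is_derive u s (v s * G s)) /\ (forall s, is_derive v s (duffing (u s) * G s)).

Lemma duffing_bound u : Rabs u <= 1 -> Rabs (duffing u) <= 2.
Proof.
  intros H. apply Rabs_le_between in H.
  assert (0 <= 1 - u ^ 2 <= 1) by nra.
  apply Rabs_le. unfold duffing. split; nra.
Qed.

Lemma duffing_energy_estimate (a b c d g C : R) :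
  Rabs a <= 1 -> Rabs b <= 1 -> 0 <= g <= C ->
  Rabs (2 * (a - b) * (c * g - d * g) + 2 * (c - d) * (duffing a * g - duffing b * g))
    <= 5 * C * ((a - b) ^ 2 + (c - d) ^ 2).
Proof.
  intros Ha Hb Hg. apply Rabs_le_between in Ha; apply Rabs_le_between in Hb.
  (* [duffing a - duffing b = (a - b) (2 (a^2 + a b + b^2) - 2)] *)
  set (k := -1 + 2 * (a * a + a * b + b * b)).
  assert (Hk : Rabs k <= 5) by (apply Rabs_le; unfold k; split; nra).
  assert (Hxy : 2 * Rabs ((a - b) * (c - d)) <= (a - b) ^ 2 + (c - d) ^ 2).
  { rewrite Rabs_mult, <- (pow2_abs (a - b)), <- (pow2_abs (c - d)).
    pose proof (pow2_ge_0 (Rabs (a - b) - Rabs (c - d))). nra. }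
  replace (2 * (a - b) * (c * g - d * g) + 2 * (c - d) * (duffing a * g - duffing b * g))
    with (2 * g * ((a - b) * (c - d)) * k) by (unfold k, duffing; ring).
  set (X := (a - b) * (c - d)) in *.
  rewrite !Rabs_mult, (Rabs_pos_eq 2), (Rabs_pos_eq g) by lra.
  pose proof (Rabs_pos X); pose proof (Rabs_pos k).
  assert (g * Rabs k <= C * 5) by (apply Rmult_le_compat; lra).
  nra.
Qed.

Lemma duffing_sol_unique (G u1 v1 u2 v2 : R -> R) (C : R) :
  duffing_sol G u1 v1 -> duffing_sol G u2 v2 -> (forall s, 0 <= G s <= C) ->
  (forall s, Rabs (u1 s) <= 1) -> (forall s, Rabs (u2 s) <= 1) ->
  u1 0 = u2 0 -> v1 0 = v2 0 -> forall s, u1 s = u2 s /\ v1 s = v2 s.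
Proof.
  intros [Hu1 Hv1] [Hu2 Hv2] HG Hb1 Hb2 E1 E2.
  set (E := fun s => (u1 s - u2 s) ^ 2 + (v1 s - v2 s) ^ 2).
  assert (HE : forall s, E s = 0).
  { apply (gronwall_zero E (fun s =>
      2 * (u1 s - u2 s) * (v1 s * G s - v2 s * G s)
      + 2 * (v1 s - v2 s) * (duffing (u1 s) * G s - duffing (u2 s) * G s)) (5 * C)).
    - intro s. unfold E. auto_derive.
      + repeat split; eexists; eauto.
      + rewrite (Derive_of_is_derive _ _ _ (Hu1 s)), (Derive_of_is_derive _ _ _ (Hu2 s)),
          (Derive_of_is_derive _ _ _ (Hv1 s)), (Derive_of_is_derive _ _ _ (Hv2 s)). ring.
    - intro s. unfold E. pose proof (pow2_ge_0 (u1 s - u2 s)). pose proof (pow2_ge_0 (v1 s - v2 s)). lra.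
    - intro s. now apply duffing_energy_estimate.
    - unfold E. rewrite E1, E2. ring. }
  intro s. specialize (HE s). unfold E in HE.
  pose proof (pow2_ge_0 (u1 s - u2 s)); pose proof (pow2_ge_0 (v1 s - v2 s)).
  split; apply Rminus_diag_uniq; nra.
Qed.

Lemma duffing_sol_comp (G phi z w : R -> R) :
  duffing_sol (fun _ => 1) z w -> (forall p, is_derive phi p (G p)) ->
  duffing_sol G (fun p => z (phi p)) (fun p => w (phi p)).
Proof.
  intros [Hz Hw] Hphi. split; intro p; apply is_derive_comp_R; auto;
    [specialize (Hz (phi p)) | specialize (Hw (phi p))]; now rewrite Rmult_1_r in *.
Qed.

Lemma duffing_sol_shift (z w : R -> R) (tau : R) :
  duffing_sol (fun _ => 1) z w ->
  duffing_sol (fun _ => 1) (fun t => z (t + tau)) (fun t => w (t + tau)).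
Proof.
  intros Hs. apply (duffing_sol_comp (fun _ => 1)); auto.
  intro t. auto_derive; auto; ring.
Qed.

Lemma duffing_sol_opp (z w : R -> R) :
  duffing_sol (fun _ => 1) z w ->
  duffing_sol (fun _ => 1) (fun t => - z t) (fun t => - w t).
Proof.
  intros [Hz Hw]. split; intro t; auto_derive; try (eexists; eauto).
  - rewrite (Derive_of_is_derive _ _ _ (Hz t)). ring.
  - rewrite (Derive_of_is_derive _ _ _ (Hw t)). unfold duffing. ring.
Qed.

Lemma duffing_sol_taylor (z w : R -> R) :
  duffing_sol (fun _ => 1) z w -> (forall t, Rabs (z t) <= 1) -> z 0 = 0 ->
  forall s, Rabs (z s - w 0 * s) <= 2 * s ^ 2.
Proof.
  intros [Hz Hw] Hb Hz0 s.
  assert (Hwb : forall r, Rabs (w r - w 0) <= 2 * Rabs r).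
  { intro r. replace (Rabs r) with (Rabs (r - 0)) by (f_equal; ring).
    apply (MVT_abs_le w (fun t => duffing (z t) * 1)); [exact Hw|].
    intros. rewrite Rmult_1_r. now apply duffing_bound. }
  replace (z s - w 0 * s) with ((z s - w 0 * s) - (z 0 - w 0 * 0)) by (rewrite Hz0; ring).
  replace (2 * s ^ 2) with (2 * Rabs s * Rabs (s - 0)) by (rewrite Rminus_0_r, <- (pow2_abs s); ring).
  apply (MVT_abs_le (fun t => z t - w 0 * t) (fun t => w t - w 0)).
  - intro t. auto_derive; [now exists (w t * 1)|].
    rewrite (Derive_of_is_derive _ _ _ (Hz t)). ring.
  - intros t Ht. eapply Rle_trans; [apply Hwb|]. apply Rmult_le_compat_l; [lra|].
    unfold Rmin, Rmax in Ht. destruct (Rle_dec 0 s).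
    + rewrite !Rabs_pos_eq; lra.
    + rewrite !Rabs_left1; lra.
Qed.

(** * The arithmetic-geometric mean *)

Notation agm_a a b n := (fst (agm_seq a b n)).
Notation agm_b a b n := (snd (agm_seq a b n)).

Lemma agm_seq_S a b n :
  agm_seq a b (S n) = ((agm_a a b n + agm_b a b n) / 2, sqrt (agm_a a b n * agm_b a b n)).
Proof. reflexivity. Qed.

Lemma agm_seq_pos a b n : 0 < a -> 0 < b -> 0 < agm_a a b n /\ 0 < agm_b a b n.
Proof.
  intros Ha Hb. induction n as [|n [IHa IHb]]; simpl; [lra|].
  split; [lra|]. apply sqrt_lt_R0. nra.
Qed.

Lemma sqrt_mult_le_mean x y : 0 <= x -> 0 <= y -> sqrt (x * y) <= (x + y) / 2.
Proof.
  intros Hx Hy. rewrite sqrt_mult_alt by lra.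
  pose proof (sqrt_sqrt x Hx); pose proof (sqrt_sqrt y Hy).
  pose proof (sqrt_pos x); pose proof (sqrt_pos y).
  pose proof (pow2_ge_0 (sqrt x - sqrt y)). nra.
Qed.

Lemma sqrt_mult_between x y : 0 <= x <= y -> x <= sqrt (x * y) <= y.
Proof.
  intros H. split.
  - rewrite <- (sqrt_square x) at 1 by lra. apply sqrt_le_1_alt. nra.
  - rewrite <- (sqrt_square y) at 2 by lra. apply sqrt_le_1_alt. nra.
Qed.

Lemma agm_seq_le a b n : 0 < a -> 0 < b -> agm_b a b (S n) <= agm_a a b (S n).
Proof.
  intros Ha Hb. rewrite agm_seq_S. simpl. destruct (agm_seq_pos a b n Ha Hb).
  apply sqrt_mult_le_mean; lra.
Qed.

Lemma agm_seq_step a b n : 0 < a -> 0 < b ->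
  agm_a a b (S (S n)) <= agm_a a b (S n) /\ agm_b a b (S n) <= agm_b a b (S (S n)) /\
  agm_a a b (S (S n)) - agm_b a b (S (S n)) <= (agm_a a b (S n) - agm_b a b (S n)) / 2.
Proof.
  intros Ha Hb. pose proof (agm_seq_le a b n Ha Hb). destruct (agm_seq_pos a b (S n) Ha Hb).
  rewrite (agm_seq_S a b (S n)). cbn [fst snd]. rewrite Rmult_comm.
  pose proof (sqrt_mult_between (agm_b a b (S n)) (agm_a a b (S n)) ltac:(lra)).
  lra.
Qed.

Lemma agm_seq_gap a b n : 0 < a -> 0 < b ->
  agm_a a b (S n) - agm_b a b (S n) <= (agm_a a b 1 - agm_b a b 1) * (/ 2) ^ n.
Proof.
  intros Ha Hb. induction n as [|n IH]; [simpl; lra|].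
  destruct (agm_seq_step a b n Ha Hb) as [_ [_ H]]. simpl pow. lra.
Qed.

Lemma AGM_spec a b : 0 < a -> 0 < b ->
  is_lim_seq (fun n => agm_a a b n) (AGM a b) /\ is_lim_seq (fun n => agm_b a b n) (AGM a b) /\
  agm_b a b 1 <= AGM a b.
Proof.
  intros Ha Hb.
  set (A := fun n => agm_a a b (S n)). set (B := fun n => agm_b a b (S n)).
  assert (HA : forall n, A (S n) <= A n) by (intro n; apply (agm_seq_step a b n Ha Hb)).
  assert (HB : forall n, B n <= B (S n)) by (intro n; apply (agm_seq_step a b n Ha Hb)).
  assert (HBA : forall n, B n <= A n) by (intro n; apply (agm_seq_le a b n Ha Hb)).
  assert (HB0 : forall n, B O <= B n).
  { induction n as [|n IHn]; [lra|]. specialize (HB n). lra. }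
  destruct (ex_finite_lim_seq_decr A (B O) HA) as [l Hl].
  { intro n. specialize (HB0 n); specialize (HBA n). lra. }
  assert (Hl_AGM : AGM a b = l).
  { unfold AGM. rewrite <- Lim_seq_incr_1. fold A. now rewrite (is_lim_seq_unique _ _ Hl). }
  rewrite Hl_AGM.
  assert (Hgap : is_lim_seq (fun n => A n - B n) 0).
  { apply (is_lim_seq_le_le (fun _ => 0) _ (fun n => (agm_a a b 1 - agm_b a b 1) * (/ 2) ^ n)).
    - intro n. specialize (HBA n). pose proof (agm_seq_gap a b n Ha Hb). unfold A, B in *. lra.
    - apply is_lim_seq_const.
    - replace (Finite 0) with (Rbar_mult (agm_a a b 1 - agm_b a b 1) 0) by (simpl; f_equal; ring).
      apply is_lim_seq_scal_l, is_lim_seq_geom. rewrite Rabs_right; lra. }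
  assert (HBl : is_lim_seq B l).
  { apply (is_lim_seq_ext (fun n => A n - (A n - B n))); [intro; ring|].
    replace l with (l - 0) by ring. now apply is_lim_seq_minus'. }
  split; [|split].
  - now apply is_lim_seq_incr_1.
  - now apply is_lim_seq_incr_1.
  - apply (is_lim_seq_incr_compare B l HBl HB O).
Qed.

Lemma AGM_pos a b : 0 < a -> 0 < b -> 0 < AGM a b.
Proof.
  intros Ha Hb. destruct (AGM_spec a b Ha Hb) as [_ [_ H]].
  destruct (agm_seq_pos a b 1 Ha Hb). lra.
Qed.

Lemma AGM_ge_min a b : 0 < a -> 0 < b -> Rmin a b <= AGM a b.
Proof.
  intros Ha Hb. destruct (AGM_spec a b Ha Hb) as [_ [_ H]].
  simpl in H. eapply Rle_trans; [|exact H].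
  apply Rmin_case_strong; intro Hm.
  - rewrite <- (sqrt_square a) at 1 by lra. apply sqrt_le_1_alt. nra.
  - rewrite <- (sqrt_square b) at 1 by lra. apply sqrt_le_1_alt. nra.
Qed.

Lemma agm_seq_le_compat a b a' b' n : 0 < a -> 0 < b -> a <= a' -> b <= b' ->
  agm_a a b n <= agm_a a' b' n /\ agm_b a b n <= agm_b a' b' n.
Proof.
  intros Ha Hb Ha' Hb'. induction n as [|n [IHa IHb]]; simpl; [lra|].
  destruct (agm_seq_pos a b n Ha Hb). split; [lra|].
  apply sqrt_le_1_alt. apply Rmult_le_compat; lra.
Qed.

Lemma AGM_le_compat a b a' b' : 0 < a -> 0 < b -> a <= a' -> b <= b' -> AGM a b <= AGM a' b'.
Proof.
  intros Ha Hb Ha' Hb'.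
  destruct (AGM_spec a b Ha Hb) as [H1 _].
  destruct (AGM_spec a' b' ltac:(lra) ltac:(lra)) as [H2 _].
  exact (is_lim_seq_le _ _ _ _ (fun n => proj1 (agm_seq_le_compat a b a' b' n Ha Hb Ha' Hb')) H1 H2).
Qed.

Lemma agm_seq_scal k a b n : 0 < k -> 0 < a -> 0 < b ->
  agm_a (k * a) (k * b) n = k * agm_a a b n /\ agm_b (k * a) (k * b) n = k * agm_b a b n.
Proof.
  intros Hk Ha Hb. induction n as [|n [IHa IHb]]; simpl; [lra|].
  rewrite IHa, IHb. split; [lra|].
  replace (k * agm_a a b n * (k * agm_b a b n)) with ((k * k) * (agm_a a b n * agm_b a b n)) by ring.
  destruct (agm_seq_pos a b n Ha Hb).
  rewrite sqrt_mult_alt, sqrt_square by nra. reflexivity.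
Qed.

Lemma AGM_scal k a b : 0 < k -> 0 < a -> 0 < b -> AGM (k * a) (k * b) = k * AGM a b.
Proof.
  intros Hk Ha Hb.
  destruct (AGM_spec a b Ha Hb) as [H1 _].
  destruct (AGM_spec (k * a) (k * b) ltac:(nra) ltac:(nra)) as [H2 _].
  assert (H3 : is_lim_seq (fun n => agm_a (k * a) (k * b) n) (k * AGM a b)).
  { apply (is_lim_seq_ext (fun n => k * agm_a a b n)).
    - intro n. symmetry. apply (agm_seq_scal k a b n Hk Ha Hb).
    - exact (is_lim_seq_scal_l _ k (AGM a b) H1). }
  pose proof (is_lim_seq_unique _ _ H2) as E2. rewrite (is_lim_seq_unique _ _ H3) in E2.
  now injection E2.
Qed.

(* [(a, b)] scaled by [mu = min (a'/a) (b'/b) > 1] stays below [(a', b')], and [AGM] is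
   homogeneous. *)
Lemma AGM_lt_compat a b a' b' : 0 < a -> 0 < b -> a < a' -> b < b' -> AGM a b < AGM a' b'.
Proof.
  intros Ha Hb Ha' Hb'.
  set (mu := Rmin (a' / a) (b' / b)).
  assert (Hmu : 1 < mu).
  { unfold mu. apply Rmin_case; [apply (Rmult_lt_reg_r a) | apply (Rmult_lt_reg_r b)]; try lra;
      unfold Rdiv; rewrite Rmult_assoc, Rinv_l; lra. }
  assert (Hma : mu * a <= a').
  { apply (Rle_trans _ (a' / a * a)); [apply Rmult_le_compat_r, Rmin_l; lra | right; field; lra]. }
  assert (Hmb : mu * b <= b').
  { apply (Rle_trans _ (b' / b * b)); [apply Rmult_le_compat_r, Rmin_r; lra | right; field; lra]. }
  pose proof (AGM_le_compat (mu * a) (mu * b) a' b' ltac:(nra) ltac:(nra) Hma Hmb) as H.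
  rewrite AGM_scal in H by lra.
  pose proof (AGM_pos a b Ha Hb). nra.
Qed.

(** * Gauss' integral and Landen's transformation *)

Definition qf (a b x : R) : R := (a * cos x) ^ 2 + (b * sin x) ^ 2.

Lemma qf_bounds a b x : 0 < b <= a -> b ^ 2 <= qf a b x <= a ^ 2.
Proof.
  intros H. unfold qf. pose proof (sin2_cos2 x) as Hcs. unfold Rsqr in Hcs.
  pose proof (pow2_ge_0 (cos x)); pose proof (pow2_ge_0 (sin x)).
  assert (0 <= a ^ 2 - b ^ 2) by nra.
  assert (0 <= (a ^ 2 - b ^ 2) * cos x ^ 2) by (apply Rmult_le_pos; lra).
  assert (0 <= (a ^ 2 - b ^ 2) * sin x ^ 2) by (apply Rmult_le_pos; lra).
  split; nra.
Qed.

Lemma qf_sym a b x : qf a b (x + PI / 2) = qf b a x.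
Proof.
  unfold qf. rewrite cos_plus, sin_plus, cos_PI2, sin_PI2. ring.
Qed.

Lemma qf_pos a b x : 0 < a -> 0 < b -> 0 < qf a b x.
Proof.
  intros Ha Hb. destruct (Rle_or_lt b a).
  - pose proof (qf_bounds a b x). nra.
  - pose proof (qf_bounds b a (x - PI / 2)) as H1.
    replace x with (x - PI / 2 + PI / 2) at 1 by ring. rewrite qf_sym. nra.
Qed.

Lemma sqrt_qf_pos a b x : 0 < a -> 0 < b -> 0 < sqrt (qf a b x).
Proof. intros Ha Hb. apply sqrt_lt_R0, qf_pos; assumption. Qed.

Lemma inv_sqrt_qf_continuous a b x : 0 < a -> 0 < b -> continuous (fun y => / sqrt (qf a b y)) x.
Proof.
  intros Ha Hb. apply (@ex_derive_continuous R_AbsRing R_NormedModule). unfold qf. auto_derive.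
  replace (a * cos x * (a * cos x * 1) + b * sin x * (b * sin x * 1)) with (qf a b x)
    by (unfold qf; ring).
  pose proof (qf_pos a b x Ha Hb). pose proof (sqrt_qf_pos a b x Ha Hb).
  repeat split; try apply Rgt_not_eq; lra.
Qed.

Lemma inv_sqrt_qf_ex_RInt a b u v : 0 < a -> 0 < b -> ex_RInt (fun y => / sqrt (qf a b y)) u v.
Proof.
  intros Ha Hb. apply (@ex_RInt_continuous R_CompleteNormedModule).
  intros; now apply inv_sqrt_qf_continuous.
Qed.

Definition gauss_integral (a b : R) : R := RInt (fun y => / sqrt (qf a b y)) 0 PI.

Lemma gauss_integral_half a b : 0 < a -> 0 < b ->
  gauss_integral a b = 2 * RInt (fun y => / sqrt (qf a b y)) 0 (PI / 2).
Proof.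
  intros Ha Hb. unfold gauss_integral.
  pose proof (fun u v => inv_sqrt_qf_ex_RInt a b u v Ha Hb) as Hex.
  rewrite <- (RInt_Chasles (V := R_CompleteNormedModule) _ 0 (PI / 2) PI) by apply Hex.
  assert (Hrefl : RInt (fun y => / sqrt (qf a b y)) (PI / 2) PI
                  = RInt (fun y => / sqrt (qf a b y)) 0 (PI / 2)).
  { pose proof (RInt_comp_lin (V := R_CompleteNormedModule) (fun y => / sqrt (qf a b y)) (-1) PI 0 (PI / 2)) as H.
    replace (-1 * 0 + PI) with PI in H by ring. replace (-1 * (PI / 2) + PI) with (PI / 2) in H by field.
    rewrite <- (opp_RInt_swap (V := R_CompleteNormedModule)), <- (H (Hex _ _)) by apply Hex.
    rewrite (RInt_ext (V := R_CompleteNormedModule) _ (fun x => opp (/ sqrt (qf a b x)))).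
    - rewrite (RInt_opp (V := R_CompleteNormedModule)) by apply Hex. apply opp_opp.
    - intros x _. unfold qf. replace (-1 * x + PI) with (PI - x) by ring.
      rewrite sin_PI_x, cos_minus, cos_PI, sin_PI.
      change (-1 * / sqrt ((a * (-1 * cos x + 0 * sin x)) ^ 2 + (b * sin x) ^ 2)
              = - / sqrt ((a * cos x) ^ 2 + (b * sin x) ^ 2)).
      replace ((a * (-1 * cos x + 0 * sin x)) ^ 2) with ((a * cos x) ^ 2) by ring. ring. }
  rewrite Hrefl. change (plus ?u ?u) with (u + u). ring.
Qed.

(* Landen's change of variable [x |-> landen_angle a b x], which maps [[0, PI/2]] onto [[0, PI]]
   and carries the integrand for [(a, b)] to the one for [((a + b) / 2, sqrt (a b))]. *)
Definition landen_angle (a b x : R) : R := x + RInt (fun s => a * b / qf a b s) 0 x.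
Definition landen_cos (a b x : R) : R := (a * cos x ^ 2 - b * sin x ^ 2) / sqrt (qf a b x).
Definition landen_sin (a b x : R) : R := (a + b) * sin x * cos x / sqrt (qf a b x).

Lemma landen_angle_derive a b x : 0 < a -> 0 < b ->
  is_derive (landen_angle a b) x (1 + a * b / qf a b x).
Proof.
  intros Ha Hb.
  assert (Hc : forall y, continuous (fun s => a * b / qf a b s) y).
  { intro y. apply (@ex_derive_continuous R_AbsRing R_NormedModule). unfold qf. auto_derive.
    pose proof (qf_pos a b y Ha Hb). unfold qf in *. lra. }
  apply (is_derive_plus (fun x => x) (fun x => RInt (fun s => a * b / qf a b s) 0 x)).
  - apply (is_derive_id x).
  - apply (is_derive_RInt (fun s => a * b / qf a b s) _ 0 x); [|apply Hc].
    apply filter_forall. intro y. apply (@RInt_correct R_CompleteNormedModule).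
    apply (@ex_RInt_continuous R_CompleteNormedModule). intros; apply Hc.
Qed.

Lemma landen_cos_sin_derive a b x : 0 < a -> 0 < b ->
  is_derive (landen_cos a b) x (- (1 + a * b / qf a b x) * landen_sin a b x) /\
  is_derive (landen_sin a b) x ((1 + a * b / qf a b x) * landen_cos a b x).
Proof.
  intros Ha Hb. unfold landen_cos, landen_sin.
  pose proof (qf_pos a b x Ha Hb) as HQ. pose proof (sqrt_qf_pos a b x Ha Hb) as Hr.
  pose proof (sin2_cos2 x) as Hcs. unfold Rsqr in Hcs. unfold qf in *.
  replace (1 + a * b / ((a * cos x) ^ 2 + (b * sin x) ^ 2)) with
    (((a * cos x) ^ 2 + (b * sin x) ^ 2 + a * b * (sin x * sin x + cos x * cos x))
      / ((a * cos x) ^ 2 + (b * sin x) ^ 2)) by (rewrite Hcs; field; lra).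
  split; auto_derive;
    replace (a * cos x * (a * cos x * 1) + b * sin x * (b * sin x * 1))
      with ((a * cos x) ^ 2 + (b * sin x) ^ 2) by ring;
    try (repeat split; try apply Rgt_not_eq; lra);
    rewrite sqrt_sqrt by lra; field; lra.
Qed.

Lemma landen_angle_0 a b : landen_angle a b 0 = 0.
Proof. unfold landen_angle. rewrite RInt_point. apply Rplus_0_r. Qed.

(* Both sides solve [c' = - phi' s], [s' = phi' c] with the same initial values, so the
   squared distance between them is constant, hence zero. *)
Lemma landen_angle_cos_sin a b x : 0 < a -> 0 < b ->
  cos (landen_angle a b x) = landen_cos a b x /\ sin (landen_angle a b x) = landen_sin a b x.
Proof.
  intros Ha Hb.
  set (E := fun x => (cos (landen_angle a b x) - landen_cos a b x) ^ 2
                     + (sin (landen_angle a b x) - landen_sin a b x) ^ 2).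
  assert (HD : forall y, is_derive E y 0).
  { intro y. unfold E.
    pose proof (landen_angle_derive a b y Ha Hb) as H1.
    destruct (landen_cos_sin_derive a b y Ha Hb) as [H2 H3].
    auto_derive; [repeat split; eexists; eauto|].
    rewrite (Derive_of_is_derive _ _ _ H1), (Derive_of_is_derive _ _ _ H2),
      (Derive_of_is_derive _ _ _ H3). ring. }
  assert (HE0 : E 0 = 0).
  { unfold E, landen_cos, landen_sin, qf. rewrite landen_angle_0, cos_0, sin_0.
    replace ((a * 1) ^ 2 + (b * 0) ^ 2) with (a * a) by ring. rewrite sqrt_square by lra.
    field. lra. }
  pose proof (is_derive_0_const E HD x) as HE. rewrite HE0 in HE. unfold E in HE.
  pose proof (pow2_ge_0 (cos (landen_angle a b x) - landen_cos a b x)).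
  pose proof (pow2_ge_0 (sin (landen_angle a b x) - landen_sin a b x)).
  split; apply Rminus_diag_uniq; nra.
Qed.

Lemma landen_angle_ge a b x : 0 < a -> 0 < b -> 0 <= x -> x <= landen_angle a b x.
Proof.
  intros Ha Hb Hx.
  destruct (MVT_gen (landen_angle a b) 0 x (fun y => 1 + a * b / qf a b y)) as [c [_ Hc]].
  - intros; now apply landen_angle_derive.
  - intros; eapply continuity_pt_of_is_derive; now apply landen_angle_derive.
  - rewrite landen_angle_0 in Hc. pose proof (qf_pos a b c Ha Hb).
    assert (0 <= a * b / qf a b c) by (apply Rle_mult_inv_pos; nra).
    nra.
Qed.

(* On [[0, PI/2]] the sine of the angle is nonnegative, so the angle cannot reach [3 PI / 2]. *)
Lemma landen_angle_PI2_lt a b : 0 < a -> 0 < b -> landen_angle a b (PI / 2) < 3 * PI / 2.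
Proof.
  intros Ha Hb. pose proof PI_RGT_0.
  apply Rnot_le_lt. intro Hge.
  destruct (IVT_gen (landen_angle a b) 0 (PI / 2) (3 * PI / 2)) as [y [Hy Hy2]].
  - intro x. eapply continuity_pt_of_is_derive. now apply landen_angle_derive.
  - rewrite landen_angle_0, Rmin_left, Rmax_right; lra.
  - rewrite Rmin_left, Rmax_right in Hy by lra.
    destruct (landen_angle_cos_sin a b y Ha Hb) as [_ Hs]. rewrite Hy2 in Hs.
    replace (3 * PI / 2) with (PI / 2 + PI) in Hs by field.
    rewrite neg_sin, sin_PI2 in Hs.
    assert (0 <= landen_sin a b y); [|lra].
    unfold landen_sin. apply Rle_mult_inv_pos; [|now apply sqrt_qf_pos].
    pose proof (sin_ge_0 y ltac:(lra) ltac:(lra)). pose proof (cos_ge_0 y ltac:(lra) ltac:(lra)).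
    apply Rmult_le_pos; [apply Rmult_le_pos|]; lra.
Qed.

Lemma landen_angle_PI2 a b : 0 < a -> 0 < b -> landen_angle a b (PI / 2) = PI.
Proof.
  intros Ha Hb. pose proof PI_RGT_0.
  pose proof (landen_angle_ge a b (PI / 2) Ha Hb ltac:(lra)).
  pose proof (landen_angle_PI2_lt a b Ha Hb).
  destruct (landen_angle_cos_sin a b (PI / 2) Ha Hb) as [_ Hs].
  unfold landen_sin in Hs. rewrite cos_PI2, Rmult_0_r, Rdiv_0_l in Hs.
  destruct (sin_eq_O_2PI_0 (landen_angle a b (PI / 2)) ltac:(lra) ltac:(lra) Hs) as [Hz|[HPI|H2PI]]; lra.
Qed.

Lemma landen_integrand a b y : 0 < a -> 0 < b ->
  (1 + a * b / qf a b y) * / sqrt (qf ((a + b) / 2) (sqrt (a * b)) (landen_angle a b y))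
  = 2 * / sqrt (qf a b y).
Proof.
  intros Ha Hb. pose proof (qf_pos a b y Ha Hb) as HQ. pose proof (sqrt_qf_pos a b y Ha Hb) as Hr.
  assert (HQ1 : qf ((a + b) / 2) (sqrt (a * b)) (landen_angle a b y)
                = ((qf a b y + a * b) / (2 * sqrt (qf a b y))) ^ 2).
  { unfold qf at 1. destruct (landen_angle_cos_sin a b y Ha Hb) as [-> ->].
    rewrite Rpow_mult_distr, (Rpow_mult_distr (sqrt (a * b))), pow2_sqrt by nra.
    unfold landen_cos, landen_sin.
    pose proof (sin2_cos2 y) as Hcs. unfold Rsqr in Hcs.
    replace (qf a b y + a * b) with ((a + b) * (a * cos y ^ 2 + b * sin y ^ 2))
      by (unfold qf; rewrite <- (Rmult_1_r (a * b)), <- Hcs; ring).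
    field. lra. }
  rewrite HQ1, sqrt_pow2 by (apply Rle_mult_inv_pos; nra).
  rewrite <- (sqrt_sqrt (qf a b y)) at 1 2 by lra.
  field. split; nra.
Qed.

Lemma gauss_integral_landen a b : 0 < a -> 0 < b ->
  gauss_integral a b = gauss_integral ((a + b) / 2) (sqrt (a * b)).
Proof.
  intros Ha Hb.
  assert (Hb1 : 0 < sqrt (a * b)) by (apply sqrt_lt_R0; nra).
  rewrite gauss_integral_half by assumption. unfold gauss_integral.
  transitivity (RInt (fun y => / sqrt (qf ((a + b) / 2) (sqrt (a * b)) y))
                  (landen_angle a b 0) (landen_angle a b (PI / 2))).
  2: now rewrite landen_angle_0, landen_angle_PI2.
  rewrite <- (RInt_comp (V := R_CompleteNormedModule) _ (landen_angle a b) (fun y => 1 + a * b / qf a b y)).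
  - rewrite (RInt_ext (V := R_CompleteNormedModule)
      (fun y => scal (1 + a * b / qf a b y)
                     (/ sqrt (qf ((a + b) / 2) (sqrt (a * b)) (landen_angle a b y))))
      (fun y => scal 2 (/ sqrt (qf a b y)))).
    + rewrite (RInt_scal (V := R_CompleteNormedModule)) by now apply inv_sqrt_qf_ex_RInt.
      reflexivity.
    + intros x _. now apply landen_integrand.
  - intros; apply inv_sqrt_qf_continuous; lra.
  - intros x _. split; [now apply landen_angle_derive|].
    apply (@ex_derive_continuous R_AbsRing R_NormedModule). unfold qf. auto_derive.
    pose proof (qf_pos a b x Ha Hb). unfold qf in *. lra.
Qed.

Lemma gauss_integral_agm_seq a b n : 0 < a -> 0 < b ->
  gauss_integral a b = gauss_integral (agm_a a b n) (agm_b a b n).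
Proof.
  intros Ha Hb. induction n as [|n IH]; [reflexivity|].
  rewrite IH, agm_seq_S. destruct (agm_seq_pos a b n Ha Hb). now apply gauss_integral_landen.
Qed.

Lemma gauss_integral_bounds a b : 0 < b <= a -> PI / a <= gauss_integral a b <= PI / b.
Proof.
  intros H. unfold gauss_integral. pose proof PI_RGT_0.
  assert (Hb : forall t, b <= sqrt (qf a b t) <= a).
  { intro t. pose proof (qf_bounds a b t H). split.
    - rewrite <- (sqrt_pow2 b) at 1 by lra. apply sqrt_le_1_alt; lra.
    - rewrite <- (sqrt_pow2 a) at 2 by lra. apply sqrt_le_1_alt; lra. }
  assert (Hex : ex_RInt (fun t => / sqrt (qf a b t)) 0 PI) by (apply inv_sqrt_qf_ex_RInt; lra).
  assert (Hconst : forall c, RInt (fun _ => c) 0 PI = PI * c)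
    by (intro c; rewrite RInt_const; apply (f_equal (fun u => u * c)); ring).
  unfold Rdiv. rewrite <- !Hconst.
  split; apply RInt_le; try (lra || exact Hex || apply ex_RInt_const);
    intros t _; specialize (Hb t); apply Rinv_le_contravar; lra.
Qed.

Lemma gauss_integral_AGM a b : 0 < a -> 0 < b -> gauss_integral a b = PI / AGM a b.
Proof.
  intros Ha Hb. destruct (AGM_spec a b Ha Hb) as [HA [HB _]].
  pose proof (AGM_pos a b Ha Hb) as HM.
  assert (Hlim : forall u : nat -> R, is_lim_seq u (AGM a b) ->
                 is_lim_seq (fun n => PI / u (S n)) (PI / AGM a b)).
  { intros u Hu. apply is_lim_seq_incr_1 in Hu.
    apply (is_lim_seq_inv _ (AGM a b)) in Hu; [|intro E; injection E; lra].
    exact (is_lim_seq_scal_l _ PI _ Hu). }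
  assert (Hbd : forall n, PI / agm_a a b (S n) <= gauss_integral a b <= PI / agm_b a b (S n)).
  { intro n. rewrite (gauss_integral_agm_seq a b (S n) Ha Hb). apply gauss_integral_bounds.
    pose proof (agm_seq_le a b n Ha Hb). destruct (agm_seq_pos a b (S n) Ha Hb). lra. }
  apply Rle_antisym.
  - exact (is_lim_seq_le _ (fun n => PI / agm_b a b (S n)) (gauss_integral a b) _
             (fun n => proj2 (Hbd n)) (is_lim_seq_const _) (Hlim _ HB)).
  - exact (is_lim_seq_le (fun n => PI / agm_a a b (S n)) _ _ (gauss_integral a b)
             (fun n => proj1 (Hbd n)) (Hlim _ HA) (is_lim_seq_const _)).
Qed.

Lemma gauss_integral_comm a b : 0 < a -> 0 < b -> gauss_integral a b = gauss_integral b a.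
Proof.
  intros Ha Hb.
  rewrite (gauss_integral_landen a b), (gauss_integral_landen b a) by assumption.
  now rewrite (Rplus_comm a b), (Rmult_comm a b).
Qed.

(** * The explicit solution and its half period *)

Definition beta_of (a : R) : R := sqrt (1 + 2 * a ^ 2) / 2.
Definition amplitude (a : R) : R := sqrt (1 - 2 * a ^ 2).
Definition zslope (a : R) : R := sqrt (1 - 4 * a ^ 4).

(* Along the orbit with parameter [a], [z = amplitude a * sin p] for an angle [p] which
   advances with speed [dp/dt = speed a p]; [time_of a p] is the time at which it reaches [p]. *)
Definition speed (a p : R) : R := 2 * sqrt (qf (beta_of a) a p).
Definition time_of (a p : R) : R := RInt (fun s => / speed a s) 0 p.

Lemma Lalpha_beta_of a : Lalpha a = PI / AGM a (beta_of a).
Proof. reflexivity. Qed.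

Lemma alpha_sq_lt a : 0 < a < / sqrt 2 -> a ^ 2 < 1 / 2.
Proof.
  intros [H1 H2]. pose proof (sqrt_lt_R0 2 ltac:(lra)) as Hs.
  pose proof (sqrt_sqrt 2 ltac:(lra)) as Hss.
  assert (Ha : a * sqrt 2 < 1).
  { apply (Rmult_lt_compat_r (sqrt 2)) in H2; [|exact Hs]. now rewrite Rinv_l in H2 by lra. }
  assert (0 < a * sqrt 2) by (apply Rmult_lt_0_compat; lra).
  assert (Hsq : (a * sqrt 2) ^ 2 = 2 * a ^ 2).
  { replace ((a * sqrt 2) ^ 2) with (a ^ 2 * (sqrt 2 * sqrt 2)) by ring. rewrite Hss. ring. }
  nra.
Qed.

Lemma beta_of_spec a : 0 < a < / sqrt 2 -> 4 * beta_of a ^ 2 = 1 + 2 * a ^ 2 /\ a < beta_of a.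
Proof.
  intros H. pose proof (alpha_sq_lt a H).
  assert (E : 4 * beta_of a ^ 2 = 1 + 2 * a ^ 2).
  { unfold beta_of. replace (4 * (sqrt (1 + 2 * a ^ 2) / 2) ^ 2) with (sqrt (1 + 2 * a ^ 2) ^ 2) by field.
    apply pow2_sqrt. nra. }
  split; [exact E|].
  assert (0 <= beta_of a) by (unfold beta_of; pose proof (sqrt_pos (1 + 2 * a ^ 2)); lra).
  nra.
Qed.

Lemma amplitude_spec a : 0 < a < / sqrt 2 -> amplitude a ^ 2 = 1 - 2 * a ^ 2 /\ 0 <= amplitude a <= 1.
Proof.
  intros H. pose proof (alpha_sq_lt a H).
  assert (E : amplitude a ^ 2 = 1 - 2 * a ^ 2) by (apply pow2_sqrt; lra).
  pose proof (sqrt_pos (1 - 2 * a ^ 2)). fold (amplitude a) in *.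
  split; [exact E|]. split; [lra|]. nra.
Qed.

Lemma amplitude_speed_0 a : 0 < a < / sqrt 2 -> amplitude a * speed a 0 = zslope a.
Proof.
  intros H. destruct (beta_of_spec a H) as [E4 Hb]. pose proof (alpha_sq_lt a H).
  unfold speed, qf, amplitude, zslope. rewrite cos_0, sin_0.
  replace ((beta_of a * 1) ^ 2 + (a * 0) ^ 2) with (beta_of a ^ 2) by ring.
  rewrite sqrt_pow2 by lra.
  replace (1 - 4 * a ^ 4) with ((1 - 2 * a ^ 2) * (2 * beta_of a) ^ 2) 
    by (replace ((2 * beta_of a) ^ 2) with (4 * beta_of a ^ 2) by ring; rewrite E4; ring).
  rewrite sqrt_mult_alt, sqrt_pow2 by lra. ring.
Qed.

Lemma speed_PI a : speed a PI = speed a 0.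
Proof. unfold speed, qf. rewrite cos_PI, sin_PI, cos_0, sin_0. do 3 f_equal. ring. Qed.

Lemma speed_ge a p : 0 < a < / sqrt 2 -> 2 * a <= speed a p.
Proof.
  intros H. destruct (beta_of_spec a H) as [_ Hb].
  pose proof (qf_bounds (beta_of a) a p ltac:(lra)) as HQ.
  unfold speed. rewrite <- (sqrt_pow2 a) at 1 by lra.
  apply Rmult_le_compat_l, sqrt_le_1_alt; lra.
Qed.

Lemma speed_sq a p : 0 < a < / sqrt 2 ->
  speed a p ^ 2 = 4 * ((beta_of a * cos p) ^ 2 + (a * sin p) ^ 2).
Proof.
  intros H. destruct (beta_of_spec a H) as [_ Hb]. unfold speed.
  rewrite Rpow_mult_distr, pow2_sqrt by (apply Rlt_le, qf_pos; lra). unfold qf. ring.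
Qed.

Lemma speed_derive a p : 0 < a < / sqrt 2 ->
  is_derive (speed a) p (4 * (a ^ 2 - beta_of a ^ 2) * sin p * cos p / speed a p).
Proof.
  intros H. destruct (beta_of_spec a H) as [_ Hb].
  pose proof (qf_pos (beta_of a) a p ltac:(lra) ltac:(lra)) as HQ.
  pose proof (sqrt_qf_pos (beta_of a) a p ltac:(lra) ltac:(lra)) as Hr.
  unfold speed, qf in *. auto_derive;
    replace (beta_of a * cos p * (beta_of a * cos p * 1) + a * sin p * (a * sin p * 1))
      with ((beta_of a * cos p) ^ 2 + (a * sin p) ^ 2) by ring.
  - repeat split; try apply Rgt_not_eq; lra.
  - field. lra.
Qed.

Lemma time_of_derive a p : 0 < a < / sqrt 2 -> is_derive (time_of a) p (/ speed a p).
Proof.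
  intros H.
  assert (Hc : forall s, continuous (fun s => / speed a s) s).
  { intro s. apply (@ex_derive_continuous R_AbsRing R_NormedModule).
    eexists. apply (is_derive_inv (speed a)); [now apply speed_derive|].
    pose proof (speed_ge a s H). lra. }
  apply (is_derive_RInt (fun s => / speed a s) _ 0 p); [|apply Hc].
  apply filter_forall. intro y. apply (@RInt_correct R_CompleteNormedModule).
  apply (@ex_RInt_continuous R_CompleteNormedModule). intros; apply Hc.
Qed.

Lemma time_of_0 a : time_of a 0 = 0.
Proof. unfold time_of. now rewrite RInt_point. Qed.

Lemma time_of_PI a : 0 < a < / sqrt 2 -> time_of a PI = Lalpha a / 2.
Proof.
  intros H. destruct (beta_of_spec a H) as [_ Hb].
  unfold time_of. rewrite (RInt_ext (V := R_CompleteNormedModule) _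
                             (fun s => scal (/ 2) (/ sqrt (qf (beta_of a) a s)))).
  2: { intros s _. unfold speed. rewrite Rinv_mult. reflexivity. }
  rewrite (RInt_scal (V := R_CompleteNormedModule)) by (apply inv_sqrt_qf_ex_RInt; lra).
  change (/ 2 * gauss_integral (beta_of a) a = Lalpha a / 2).
  rewrite gauss_integral_comm, gauss_integral_AGM by lra.
  rewrite Lalpha_beta_of. field.
  pose proof (AGM_pos a (beta_of a) ltac:(lra) ltac:(lra)). lra.
Qed.

Lemma explicit_w_derive a p : 0 < a < / sqrt 2 ->
  is_derive (fun q => amplitude a * cos q * speed a q) p
    (duffing (amplitude a * sin p) * / speed a p).
Proof.
  intros H. destruct (beta_of_spec a H) as [E4 _]. destruct (amplitude_spec a H) as [Em _].
  pose proof (speed_ge a p H). pose proof (speed_sq a p H) as Eg.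
  pose proof (sin2_cos2 p) as Ecs. unfold Rsqr in Ecs.
  assert (Hd := speed_derive a p H).
  auto_derive; [repeat split; eexists; eauto|]. rewrite (Derive_of_is_derive _ _ _ Hd).
  set (g := speed a p) in *. set (m := amplitude a) in *. set (B := beta_of a) in *.
  set (s := sin p) in *. set (c := cos p) in *.
  assert (Hpoly : m * (- s * g ^ 2 + 4 * (a ^ 2 - B ^ 2) * s * c * c)
                  = -2 * (m * s) * (1 - (m * s) ^ 2)).
  { rewrite Eg.
    assert (Hres : m * (- s * (4 * ((B * c) ^ 2 + (a * s) ^ 2)) + 4 * (a ^ 2 - B ^ 2) * s * c * c)
                   - (-2 * (m * s) * (1 - (m * s) ^ 2))
                   = m * (-2 * s * c ^ 2 * (4 * B ^ 2 - (1 + 2 * a ^ 2))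
                          - 2 * s ^ 3 * (m ^ 2 - (1 - 2 * a ^ 2)) + 2 * s * (1 - (s * s + c * c))))
      by ring.
    rewrite E4, Em, Ecs in Hres. lra. }
  apply (Rmult_eq_reg_r g); [|lra].
  transitivity (m * (- s * g ^ 2 + 4 * (a ^ 2 - B ^ 2) * s * c * c) / g * g); [field; lra|].
  rewrite Hpoly. unfold duffing. field. lra.
Qed.

Lemma explicit_duffing_sol a : 0 < a < / sqrt 2 ->
  duffing_sol (fun p => / speed a p) (fun p => amplitude a * sin p)
              (fun p => amplitude a * cos p * speed a p).
Proof.
  intros H. split; intro p; [|now apply explicit_w_derive].
  pose proof (speed_ge a p H).
  auto_derive; [exact I|]. field. lra.
Qed.

Definition antiperiodic_slope (z : R -> R) (T c : R) : Prop :=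
  z 0 = 0 /\ (forall t, z (t + T) = - z t) /\ (forall s, Rabs (z s - c * s) <= 2 * s ^ 2).

Lemma duffing_sol_time_of (z w : R -> R) (a : R) :
  0 < a < / sqrt 2 -> duffing_sol (fun _ => 1) z w -> (forall t, Rabs (z t) <= 1) ->
  z 0 = 0 -> w 0 = zslope a ->
  forall p, z (time_of a p) = amplitude a * sin p /\ w (time_of a p) = amplitude a * cos p * speed a p.
Proof.
  intros Ha Hs Hb Hz0 Hw0.
  destruct (amplitude_spec a Ha) as [_ Hm].
  apply (duffing_sol_unique (fun p => / speed a p) _ _ _ _ (/ (2 * a))).
  - apply duffing_sol_comp; [exact Hs|]. intro p. now apply time_of_derive.
  - now apply explicit_duffing_sol.
  - intro p. pose proof (speed_ge a p Ha). split.
    + apply Rlt_le, Rinv_0_lt_compat; lra.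
    + apply Rinv_le_contravar; lra.
  - intro p. apply Hb.
  - intro p. rewrite Rabs_mult, (Rabs_pos_eq (amplitude a)) by lra.
    pose proof (Rabs_pos (sin p)). assert (Rabs (sin p) <= 1) by (apply Rabs_le, SIN_bound).
    nra.
  - now rewrite time_of_0, sin_0, Hz0, Rmult_0_r.
  - now rewrite time_of_0, cos_0, Hw0, Rmult_1_r, amplitude_speed_0.
Qed.

(* At the angle [p = PI]: [z (L/2) = 0] and [w (L/2) = - w 0]; uniqueness then compares
   [z (. + L/2)] with [- z]. *)
Lemma duffing_sol_half_period (z w : R -> R) (a : R) :
  0 < a < / sqrt 2 -> duffing_sol (fun _ => 1) z w -> (forall t, Rabs (z t) <= 1) ->
  z 0 = 0 -> w 0 = zslope a -> forall t, z (t + Lalpha a / 2) = - z t.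
Proof.
  intros Ha Hs Hb Hz0 Hw0.
  destruct (duffing_sol_time_of z w a Ha Hs Hb Hz0 Hw0 PI) as [HzT HwT].
  rewrite time_of_PI, sin_PI, Rmult_0_r in HzT by exact Ha.
  rewrite time_of_PI, cos_PI, speed_PI in HwT by exact Ha.
  replace (amplitude a * -1 * speed a 0) with (- (amplitude a * speed a 0)) in HwT by ring.
  rewrite amplitude_speed_0, <- Hw0 in HwT by exact Ha.
  enough (H : forall t, z (t + Lalpha a / 2) = - z t /\ w (t + Lalpha a / 2) = - w t)
    by (intro t; apply H).
  apply (duffing_sol_unique (fun _ => 1) _ _ _ _ 1).
  - now apply duffing_sol_shift.
  - now apply duffing_sol_opp.
  - intro; lra.
  - intro; apply Hb.
  - intro s. rewrite Rabs_Ropp. apply Hb.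
  - now rewrite Rplus_0_l, HzT, Hz0, Ropp_0.
  - now rewrite Rplus_0_l.
Qed.

Lemma solves_system_conserved (x y z : R -> R) (x0 y0 : R) :
  solves_system x y z x0 y0 ->
  (forall t, x t * y t = x0 * y0) /\ (forall t, x t ^ 2 + y t ^ 2 + z t ^ 2 = x0 ^ 2 + y0 ^ 2).
Proof.
  intros [Hx0 [Hy0 [Hz0 [Hx [Hy Hz]]]]].
  split; intro t; rewrite <- Hx0, <- Hy0.
  - apply (is_derive_0_const (fun t => x t * y t)). intro s.
    auto_derive; [repeat split; eexists; eauto|].
    rewrite (Derive_of_is_derive _ _ _ (Hx s)), (Derive_of_is_derive _ _ _ (Hy s)). ring.
  - replace (x 0 ^ 2 + y 0 ^ 2) with (x 0 ^ 2 + y 0 ^ 2 + z 0 ^ 2) by (rewrite Hz0; ring).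
    apply (is_derive_0_const (fun t => x t ^ 2 + y t ^ 2 + z t ^ 2)). intro s.
    auto_derive; [repeat split; eexists; eauto|].
    rewrite (Derive_of_is_derive _ _ _ (Hx s)), (Derive_of_is_derive _ _ _ (Hy s)),
      (Derive_of_is_derive _ _ _ (Hz s)). ring.
Qed.

Lemma solves_system_duffing (x y z : R -> R) (x0 y0 : R) :
  solves_system x y z x0 y0 -> x0 ^ 2 + y0 ^ 2 = 1 ->
  duffing_sol (fun _ => 1) z (fun t => x t ^ 2 - y t ^ 2) /\ (forall t, Rabs (z t) <= 1).
Proof.
  intros Hs H1. destruct (solves_system_conserved x y z x0 y0 Hs) as [_ Hc].
  destruct Hs as [_ [_ [_ [Hx [Hy Hz]]]]].
  split; [split|]; intro t.
  - rewrite Rmult_1_r. apply Hz.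
  - auto_derive; [repeat split; eexists; eauto|].
    rewrite (Derive_of_is_derive _ _ _ (Hx t)), (Derive_of_is_derive _ _ _ (Hy t)).
    specialize (Hc t). rewrite H1 in Hc. unfold duffing.
    replace (1 - z t ^ 2) with (x t ^ 2 + y t ^ 2) by lra. ring.
  - specialize (Hc t). rewrite H1 in Hc. apply Rabs_le.
    pose proof (pow2_ge_0 (x t)); pose proof (pow2_ge_0 (y t)). split; nra.
Qed.

Lemma solves_system_antiperiodic_slope (x y z : R -> R) (a x0 y0 : R) :
  0 < a < / sqrt 2 -> x0 > y0 -> y0 > 0 -> x0 ^ 2 + y0 ^ 2 = 1 -> x0 * y0 = a ^ 2 ->
  solves_system x y z x0 y0 -> antiperiodic_slope z (Lalpha a / 2) (zslope a).
Proof.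
  intros Ha Hxy Hy0 H1 H2 Hs.
  destruct (solves_system_duffing x y z x0 y0 Hs H1) as [Hd Hb].
  destruct Hs as [Hx0 [Hy0' [Hz0 _]]].
  assert (Hw0 : x 0 ^ 2 - y 0 ^ 2 = zslope a).
  { rewrite Hx0, Hy0'. unfold zslope.
    replace (1 - 4 * a ^ 4) with ((x0 ^ 2 + y0 ^ 2) ^ 2 - 4 * (x0 * y0) ^ 2)
      by (rewrite H1, H2; ring).
    replace ((x0 ^ 2 + y0 ^ 2) ^ 2 - 4 * (x0 * y0) ^ 2) with ((x0 ^ 2 - y0 ^ 2) ^ 2) by ring.
    rewrite sqrt_pow2; [reflexivity | nra]. }
  split; [exact Hz0|split].
  - exact (duffing_sol_half_period z _ a Ha Hd Hb Hz0 Hw0).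
  - intro s. rewrite <- Hw0. exact (duffing_sol_taylor z _ Hd Hb Hz0 s).
Qed.

(** * Dependence on the period [L] *)

Lemma Lalpha_decreasing a a' : 0 < a -> a < a' -> a' < / sqrt 2 -> Lalpha a' < Lalpha a.
Proof.
  intros Ha Haa Ha'.
  destruct (beta_of_spec a ltac:(lra)) as [_ Hb].
  assert (Hbb : beta_of a < beta_of a').
  { unfold beta_of. apply Rmult_lt_compat_r; [lra|]. apply sqrt_lt_1_alt. split; nra. }
  pose proof (AGM_lt_compat a (beta_of a) a' (beta_of a') Ha ltac:(lra) Haa Hbb).
  pose proof (AGM_pos a (beta_of a) Ha ltac:(lra)). pose proof PI_RGT_0.
  rewrite !Lalpha_beta_of. apply Rmult_lt_compat_l; [lra|]. apply Rinv_lt_contravar; nra.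
Qed.

Lemma alpha_le_PI_div_Lalpha a : 0 < a < / sqrt 2 -> a <= PI / Lalpha a.
Proof.
  intros Ha. destruct (beta_of_spec a Ha) as [_ Hb].
  pose proof (AGM_ge_min a (beta_of a) ltac:(lra) ltac:(lra)) as Hm.
  rewrite Rmin_left in Hm by lra.
  pose proof (AGM_pos a (beta_of a) ltac:(lra) ltac:(lra)). pose proof PI_RGT_0.
  rewrite Lalpha_beta_of. replace (PI / (PI / AGM a (beta_of a))) with (AGM a (beta_of a))
    by (field; lra).
  exact Hm.
Qed.

Lemma zslope_near_1 a : 0 < a < / sqrt 2 -> Rabs (zslope a - 1) <= 4 * a.
Proof.
  intros Ha. pose proof (alpha_sq_lt a Ha).
  assert (Ha4 : 0 < 1 - 4 * a ^ 4 <= 1) by (replace (a ^ 4) with ((a ^ 2) ^ 2) by ring; nra).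
  pose proof (sqrt_sqrt _ (Rlt_le _ _ (proj1 Ha4))). pose proof (sqrt_pos (1 - 4 * a ^ 4)).
  assert (Hle1 : zslope a <= 1).
  { unfold zslope. rewrite <- sqrt_1 at 2. apply sqrt_le_1_alt. lra. }
  assert (Hge : 1 - 4 * a ^ 4 <= zslope a) by (unfold zslope in *; nra).
  assert (a ^ 4 <= a) by (replace (a ^ 4) with (a * (a ^ 2 * a)) by ring; nra).
  rewrite Rabs_left1; lra.
Qed.

Lemma zslope_continuous a : 0 < a < / sqrt 2 -> continuity_pt zslope a.
Proof.
  intros Ha. pose proof (alpha_sq_lt a Ha).
  assert (Ha4 : 0 < 1 - 4 * a ^ 4) by (replace (a ^ 4) with ((a ^ 2) ^ 2) by ring; nra).
  eapply continuity_pt_of_is_derive. unfold zslope.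
  auto_derive; [repeat split; lra | reflexivity].
Qed.

Lemma decreasing_inverse_continuous (f : R -> R) (lo hi a0 : R) :
  (forall a b, lo < a -> a < b -> b < hi -> f b < f a) -> lo < a0 < hi ->
  forall eta, 0 < eta -> exists delta, 0 < delta /\
    forall a, lo < a < hi -> Rabs (f a - f a0) < delta -> Rabs (a - a0) < eta.
Proof.
  intros Hdec Ha0 eta Heta.
  set (e := Rmin (eta / 2) (Rmin ((a0 - lo) / 2) ((hi - a0) / 2))).
  assert (He : 0 < e /\ e <= eta / 2 /\ e <= (a0 - lo) / 2 /\ e <= (hi - a0) / 2).
  { unfold e. repeat split.
    - repeat apply Rmin_case; lra.
    - apply Rmin_l.
    - eapply Rle_trans; [apply Rmin_r | apply Rmin_l].
    - eapply Rle_trans; [apply Rmin_r | apply Rmin_r]. }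
  assert (Hup : f (a0 + e) < f a0) by (apply Hdec; lra).
  assert (Hlo : f a0 < f (a0 - e)) by (apply Hdec; lra).
  exists (Rmin (f a0 - f (a0 + e)) (f (a0 - e) - f a0)). split; [apply Rmin_case; lra|].
  intros a Ha Hd.
  pose proof (Rmin_l (f a0 - f (a0 + e)) (f (a0 - e) - f a0)).
  pose proof (Rmin_r (f a0 - f (a0 + e)) (f (a0 - e) - f a0)).
  apply Rabs_def2 in Hd. apply Rabs_def1.
  - destruct (Rlt_or_le a (a0 + e)) as [Hl|Hl]; [lra|].
    destruct (Req_dec a (a0 + e)) as [->|Hne]; [lra|].
    pose proof (Hdec (a0 + e) a ltac:(lra) ltac:(lra) ltac:(lra)). lra.
  - destruct (Rlt_or_le (a0 - e) a) as [Hl|Hl]; [lra|].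
    destruct (Req_dec a (a0 - e)) as [->|Hne]; [lra|].
    pose proof (Hdec a (a0 - e) ltac:(lra) ltac:(lra) ltac:(lra)). lra.
Qed.

Lemma family_antiperiodic_slope (xs ys zs : R -> R -> R) (M : R) :
  is_solution_family xs ys zs -> PI * sqrt 2 < M ->
  exists a, 0 < a < / sqrt 2 /\ Lalpha a = M /\ antiperiodic_slope (zs M) (M / 2) (zslope a).
Proof.
  intros Hfam HM. destruct (Hfam M HM) as (a & x0 & y0 & Ha & HaM & Hxy & Hy0 & H1 & H2 & Hs).
  exists a. split; [exact Ha|]. split; [exact HaM|].
  pose proof (solves_system_antiperiodic_slope _ _ _ a x0 y0 Ha Hxy Hy0 H1 H2 Hs) as Hz.
  now rewrite HaM in Hz.
Qed.

Lemma family_slope_near (xs ys zs : R -> R -> R) (L : R) :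
  is_solution_family xs ys zs -> PI * sqrt 2 < L ->
  exists aL, 0 < aL < / sqrt 2 /\ Lalpha aL = L /\
    forall eps, 0 < eps -> exists delta, 0 < delta /\ forall M, Rabs (M - L) < delta ->
      exists c, Rabs (c - zslope aL) < eps /\ antiperiodic_slope (zs M) (M / 2) c.
Proof.
  intros Hfam HL. destruct (family_antiperiodic_slope xs ys zs L Hfam HL) as (aL & HaL & HLa & _).
  exists aL. split; [exact HaL|]. split; [exact HLa|].
  intros eps Heps.
  destruct (proj1 (continuity_pt_locally zslope aL) (zslope_continuous aL HaL) (mkposreal eps Heps))
    as [eta Heta].
  destruct (decreasing_inverse_continuous Lalpha 0 (/ sqrt 2) aL) with (eta := pos eta)
    as [d [Hd Hinv]]; [intros; now apply Lalpha_decreasing | exact HaL | apply cond_pos |].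
  exists (Rmin d (L - PI * sqrt 2)). split; [apply Rmin_case; lra|].
  intros M HM. pose proof (Rmin_l d (L - PI * sqrt 2)). pose proof (Rmin_r d (L - PI * sqrt 2)).
  destruct (family_antiperiodic_slope xs ys zs M Hfam) as (a & Ha & HaM & Hz).
  { apply Rabs_def2 in HM. lra. }
  exists (zslope a). split; [|exact Hz].
  apply (Heta a). apply Hinv; [exact Ha|]. rewrite HaM, HLa. lra.
Qed.

Lemma is_derive_of_slope_approx (f : R -> R) (L k C : R) :
  f L = 0 ->
  (forall eps, 0 < eps -> exists delta, 0 < delta /\ forall M, Rabs (M - L) < delta ->
     exists c, Rabs (c - k) < eps /\ Rabs (f M - c * (M - L)) <= C * (M - L) ^ 2) ->
  is_derive f L k.
Proof.
  intros HfL Happrox. apply is_derive_Reals. intros eps Heps.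
  destruct (Happrox (eps / 2) ltac:(lra)) as [d [Hd Hnear]].
  assert (HC : 0 < 2 * (Rabs C + 1)) by (pose proof (Rabs_pos C); lra).
  set (delta := Rmin d (eps / (2 * (Rabs C + 1)))).
  assert (Hdelta : 0 < delta) by (apply Rmin_case; [lra | apply Rdiv_lt_0_compat; lra]).
  exists (mkposreal delta Hdelta). intros h Hh0 Hh. simpl in Hh.
  pose proof (Rmin_l d (eps / (2 * (Rabs C + 1)))) as Hd1.
  pose proof (Rmin_r d (eps / (2 * (Rabs C + 1)))) as Hd2. fold delta in Hd1, Hd2.
  destruct (Hnear (L + h)) as [c [Hc Hf]]; [replace (L + h - L) with h by ring; lra|].
  replace (L + h - L) with h in Hf by ring. rewrite HfL, Rminus_0_r.
  assert (Hquot : Rabs (f (L + h) / h - c) <= Rabs C * Rabs h).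
  { replace (f (L + h) / h - c) with ((f (L + h) - c * h) / h) by (field; exact Hh0).
    unfold Rdiv. rewrite Rabs_mult, Rabs_inv.
    apply (Rmult_le_reg_r (Rabs h)); [now apply Rabs_pos_lt|].
    rewrite Rmult_assoc, Rinv_l, Rmult_1_r by now apply Rabs_no_R0.
    eapply Rle_trans; [exact Hf|]. rewrite <- (pow2_abs h).
    pose proof (Rle_abs C). pose proof (pow2_ge_0 (Rabs h)). nra. }
  assert (Hsmall : Rabs C * Rabs h < eps / 2).
  { apply (Rle_lt_trans _ ((Rabs C + 1) * Rabs h)); [pose proof (Rabs_pos h); nra|].
    apply (Rmult_lt_reg_l 2); [lra|].
    replace (2 * ((Rabs C + 1) * Rabs h)) with (2 * (Rabs C + 1) * Rabs h) by ring.
    apply (Rlt_le_trans _ (2 * (Rabs C + 1) * (eps / (2 * (Rabs C + 1))))).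
    - apply Rmult_lt_compat_l; lra.
    - right. field. lra. }
  replace (f (L + h) / h - k) with ((f (L + h) / h - c) + (c - k)) by ring.
  eapply Rle_lt_trans; [apply Rabs_triang|]. lra.
Qed.

(* [z_M (L) = z_M (L - M)] and [z_M (L/2) = - z_M ((L - M)/2)], both within [O((M - L)^2)]
   of a line of slope [-c_M], resp. [c_M / 2], through [(L, 0)]. *)
Lemma antiperiodic_slope_derive (F : R -> R -> R) (L k : R) :
  (forall eps, 0 < eps -> exists delta, 0 < delta /\ forall M, Rabs (M - L) < delta ->
     exists c, Rabs (c - k) < eps /\ antiperiodic_slope (F M) (M / 2) c) ->
  is_derive (fun M => F M L) L (- k) /\ is_derive (fun M => F M (L / 2)) L (k / 2).
Proof.
  intros Hnear.
  destruct (Hnear 1 ltac:(lra)) as [d0 [Hd0 HL]].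
  destruct (HL L) as [c0 [_ [HL0 [HLanti _]]]]; [rewrite Rminus_diag, Rabs_R0; lra|].
  assert (HLh : F L (L / 2) = 0) by (rewrite <- (Rplus_0_l (L / 2)), HLanti, HL0; lra).
  assert (HLL : F L L = 0) by (replace L with (L / 2 + L / 2) at 2 by field; rewrite HLanti; lra).
  split; [apply (is_derive_of_slope_approx _ _ _ 2) | apply (is_derive_of_slope_approx _ _ _ 2)];
    auto; intros eps Heps; destruct (Hnear eps Heps) as [d [Hd Hd_near]];
    exists d; split; auto; intros M HM; destruct (Hd_near M HM) as [c [Hc [_ [Hanti Hslope]]]].
  - exists (- c). split; [now replace (- c - - k) with (- (c - k)) by ring; rewrite Rabs_Ropp|].
    replace L with (L - M + M / 2 + M / 2) at 1 by field. rewrite !Hanti, Ropp_involutive.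
    replace (- c * (M - L)) with (c * (L - M)) by ring.
    replace ((M - L) ^ 2) with ((L - M) ^ 2) by ring. apply Hslope.
  - exists (c / 2). split.
    { replace (c / 2 - k / 2) with ((c - k) / 2) by field.
      unfold Rdiv. rewrite Rabs_mult, (Rabs_pos_eq (/ 2)) by lra. pose proof (Rabs_pos (c - k)). lra. }
    replace (L / 2) with ((L - M) / 2 + M / 2) by field. rewrite Hanti.
    replace (- F M ((L - M) / 2) - c / 2 * (M - L)) with (- (F M ((L - M) / 2) - c * ((L - M) / 2)))
      by field.
    rewrite Rabs_Ropp. eapply Rle_trans; [apply Hslope|].
    pose proof (pow2_ge_0 (M - L)). replace (((L - M) / 2) ^ 2) with ((M - L) ^ 2 / 4) by field. lra.
Qed.

Lemma is_lim_p_infty_of_inv_bound (f : R -> R) (l C L0 : R) :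
  (forall L, L0 < L -> Rabs (f L - l) <= C / L) -> is_lim f p_infty l.
Proof.
  intros Hb. apply is_lim_spec. intro eps. pose proof (cond_pos eps).
  exists (Rmax L0 (Rmax 0 (Rabs C / eps))). intros L HL.
  pose proof (Rmax_l L0 (Rmax 0 (Rabs C / eps))). pose proof (Rmax_r L0 (Rmax 0 (Rabs C / eps))).
  pose proof (Rmax_l 0 (Rabs C / eps)). pose proof (Rmax_r 0 (Rabs C / eps)).
  eapply Rle_lt_trans; [apply Hb; lra|].
  apply (Rle_lt_trans _ (Rabs C / L)); [apply Rmult_le_compat_r; [apply Rlt_le, Rinv_0_lt_compat; lra | apply Rle_abs]|].
  apply (Rmult_lt_reg_r L); [lra|]. unfold Rdiv. rewrite Rmult_assoc, Rinv_l, Rmult_1_r by lra.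
  assert (Hlt : Rabs C / eps < L) by lra.
  apply (Rmult_lt_compat_r eps) in Hlt; [|lra]. unfold Rdiv in Hlt.
  rewrite Rmult_assoc, Rinv_l, Rmult_1_r in Hlt by lra. lra.
Qed.

Theorem lemma8p6 (xs ys zs : R -> R -> R) :
  is_solution_family xs ys zs ->
  Rbar_locally p_infty
    (fun L => ex_derive (fun M => zs M L) L /\ ex_derive (fun M => zs M (L / 2)) L) /\
  is_lim (fun L => ZL zs L L) p_infty (-1) /\
  is_lim (fun L => ZL zs L (L / 2)) p_infty (1 / 2).
Proof.
  intros Hfam.
  assert (HZ : forall L, PI * sqrt 2 < L -> exists k, Rabs (k - 1) <= 4 * PI / L /\
             is_derive (fun M => zs M L) L (- k) /\ is_derive (fun M => zs M (L / 2)) L (k / 2)).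
  { intros L HL. destruct (family_slope_near xs ys zs L Hfam HL) as (a & Ha & HaL & Hnear).
    exists (zslope a). split; [|exact (antiperiodic_slope_derive zs L _ Hnear)].
    pose proof (alpha_le_PI_div_Lalpha a Ha). rewrite HaL in *.
    pose proof (zslope_near_1 a Ha). unfold Rdiv in *. lra. }
  split; [|split].
  - exists (PI * sqrt 2). intros L HL. destruct (HZ L HL) as (k & _ & H1 & H2).
    split; eexists; eassumption.
  - apply (is_lim_p_infty_of_inv_bound _ _ (4 * PI) (PI * sqrt 2)). intros L HL.
    destruct (HZ L HL) as (k & Hk & H1 & _). replace (ZL zs L L) with (- k) by (symmetry; exact (is_derive_unique _ _ _ H1)).
    replace (- k - -1) with (- (k - 1)) by ring. now rewrite Rabs_Ropp.
  - apply (is_lim_p_infty_of_inv_bound _ _ (4 * PI) (PI * sqrt 2)). intros L HL.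
    destruct (HZ L HL) as (k & Hk & _ & H2). replace (ZL zs L (L / 2)) with (k / 2) by (symmetry; exact (is_derive_unique _ _ _ H2)).
    replace (k / 2 - 1 / 2) with ((k - 1) / 2) by field.
    unfold Rdiv. rewrite Rabs_mult, (Rabs_pos_eq (/ 2)) by lra. pose proof (Rabs_pos (k - 1)).
    unfold Rdiv in Hk. lra.
Qed.
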